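(* Up to scaling, isometries of $\mathbf R^{1,1}$ and translations, there are exactly three space-like curves that translate under the mean curvature flow: \begin{itemize} \item $\cosh x = e^{y-t}$, with curvature $k=\frac{1}{\cos s}$, $-\frac\pi2<s<\frac\pi2$, translating along the $y$-axis; \item $\sinh y = e^{t-x}$, with $k = \frac{1}{\sinh s}$, $s>0$, translating along the $x$-axis; \item $\xi = e^{\eta}+t$, with $k=\frac1s$, $s>0$, translating along the $\xi$-axis. \end{itemize}
   Context: $\mathbf R^{1,1}$ is $\mathbf R^2$ with $\langle (x_1,y_1),(x_2,y_2)\rangle = x_1x_2-y_1y_2$; points $x+hy$, $h^2=1$. Light-like coordinates: $\xi=x+y$, $\eta=x-y$; the $\xi$-axis is the line $y=x$. For a space-like curve ($\langle X_u,X_u\rangle>0$), $s$ is Minkowski arc-length, $T=X_s$, $N=hT$, $T_s=kN$. A family $X(\cdot,t)$ moves by mean curvature flow if $\langle\partial_tX,N\rangle=-k$; a curve translates with velocity $C$ if $X+Ct$ is such a flow, equivalently $-\langle C,N\rangle=k$. *)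

From Stdlib Require Import Reals.
From Coquelicot Require Import Coquelicot.
Open Scope R_scope.

Definition pt := (R * R)%type.

Definition mink (p q : pt) : R := fst p * fst q - snd p * snd q.

(** Multiplication by h (h^2 = 1): h (x + h y) = y + h x. *)
Definition hmul (p : pt) : pt := (snd p, fst p).

Definition in_ivl (a b : Rbar) (s : R) : Prop := Rbar_lt a s /\ Rbar_lt s b.

Definition tangent (X : R -> pt) (s : R) : pt :=
  (Derive (fun u => fst (X u)) s, Derive (fun u => snd (X u)) s).
Definition tangent' (X : R -> pt) (s : R) : pt :=
  (Derive (fun u => fst (tangent X u)) s, Derive (fun u => snd (tangent X u)) s).

Definition normal (X : R -> pt) (s : R) : pt := hmul (tangent X s).

Definition unit_speed_curve (a b : Rbar) (X : R -> pt) : Prop :=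
  forall s, in_ivl a b s ->
    ex_derive (fun u => fst (X u)) s /\ ex_derive (fun u => snd (X u)) s /\
    ex_derive (fun u => fst (tangent X u)) s /\
    ex_derive (fun u => snd (tangent X u)) s /\
    mink (tangent X s) (tangent X s) = 1.

Definition has_curvature (a b : Rbar) (X : R -> pt) (k : R -> R) : Prop :=
  forall s, in_ivl a b s ->
    tangent' X s = (k s * fst (normal X s), k s * snd (normal X s)).

(** The curve translates with velocity C under mean curvature flow:
    - <C, N> = k. *)
Definition translator (a b : Rbar) (X : R -> pt) (C : pt) (k : R -> R) : Prop :=
  forall s, in_ivl a b s -> - mink C (normal X s) = k s.

(** Similarities of R^{1,1}: p |-> lam * L p + b0 with lam > 0 (scaling),
    L linear preserving the Minkowski form (isometry), b0 a translation. *)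
Definition similarity (F : pt -> pt) : Prop :=
  exists (lam a11 a12 a21 a22 b1 b2 : R),
    let L := fun p : pt => (a11 * fst p + a12 * snd p, a21 * fst p + a22 * snd p) in
    0 < lam /\
    (forall p q, mink (L p) (L q) = mink p q) /\
    (forall p, F p = (lam * fst (L p) + b1, lam * snd (L p) + b2)).

(** The three model translators (at time t = 0). *)
Inductive model := M1 | M2 | M3.

Definition dom_lo (m : model) : Rbar :=
  match m with M1 => Finite (- (PI / 2)) | M2 => Finite 0 | M3 => Finite 0 end.
Definition dom_hi (m : model) : Rbar :=
  match m with M1 => Finite (PI / 2) | M2 => p_infty | M3 => p_infty end.

Definition gamma (m : model) (s : R) : pt :=
  match m with
  | M1 => (ln ((1 + sin s) / cos s), - ln (cos s))
  | M2 => (ln (sinh s), ln ((exp s + 1) / (exp s - 1)))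
  | M3 => (s ^ 2 / 8 + ln (s / 2), s ^ 2 / 8 - ln (s / 2))
  end.

(** The curves as point sets (t = 0), xi = x + y, eta = x - y:
    M1 : cosh x = e^y,  M2 : sinh y = e^{-x},  M3 : xi = e^eta. *)
Definition model_set (m : model) (p : pt) : Prop :=
  match m with
  | M1 => cosh (fst p) = exp (snd p)
  | M2 => sinh (snd p) = exp (- fst p)
  | M3 => fst p + snd p = exp (fst p - snd p)
  end.

Definition model_curv (m : model) (s : R) : R :=
  match m with M1 => 1 / cos s | M2 => 1 / sinh s | M3 => 1 / s end.

(** Translation velocities (from the time dependence of the equations):
    along the y-axis, the x-axis and the xi-axis respectively. *)
Definition model_vel (m : model) : pt :=
  match m with M1 => (0, 1) | M2 => (1, 0) | M3 => (1 / 2, 1 / 2) end.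

From Stdlib Require Import Reals Lra Psatz Nsatz.
From Coquelicot Require Import Coquelicot.
Open Scope R_scope.
Set Bullet Behavior "Strict Subproofs".

(* In the light-like coordinates [xi = x + y], [eta = x - y] of a unit-speed
   space-like curve, [u = xi'] and [v = eta'] satisfy [u v = 1], [u' = k u],
   [v' = - k v], and the translator equation [- <C, N> = k] reads
   [k = al u + be v] with [al = (C2 - C1) / 2], [be = (C2 + C1) / 2].
   Hence [(al u^2 + be) e^(-2 al xi)] and [(al + be v^2) e^(2 be eta)] are
   constant.  If [al be <> 0], eliminating [u] between them gives
   [c1 e^(2 be eta) + c2 e^(-2 al xi) = 1], which a similarity scaling the two
   null directions turns into [cosh x = e^y] ([C] time-like) or
   [sinh y = e^(-x)] ([C] space-like).  If [C] is light-like, say [al = 0],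
   [u^2 - 2 be xi] is constant too, so [e^(2 be eta)] is affine in [xi]: this
   is [xi = e^eta].
   Conversely, differentiating the equation of a model set along a curve
   lying on it shows that the curve translates with that model's velocity;
   since similarities change [<C, C>] by a positive factor, its sign tells
   the three models apart. *)

Lemma in_ivl_locally (a b : Rbar) (s : R) : in_ivl a b s -> locally s (in_ivl a b).
Proof. exact (open_and _ _ (open_Rbar_gt a) (open_Rbar_lt b) s). Qed.

Lemma in_ivl_between (a b : Rbar) (s t u : R) :
  in_ivl a b s -> in_ivl a b t -> Rmin s t <= u <= Rmax s t -> in_ivl a b u.
Proof.
  intros [Has Hsb] [Hat Htb] [Hmin Hmax]; split.
  - destruct a as [ra| |]; simpl in *; auto.
    pose proof (Rmin_glb_lt _ _ _ Has Hat); lra.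
  - destruct b as [rb| |]; simpl in *; auto.
    pose proof (Rmax_lub_lt _ _ _ Hsb Htb); lra.
Qed.

Lemma in_ivl_const_of_derive_0 (a b : Rbar) (f : R -> R) :
  (forall s, in_ivl a b s -> is_derive f s 0) ->
  forall s t, in_ivl a b s -> in_ivl a b t -> f t = f s.
Proof.
  intros Hf s t Hs Ht.
  destruct (MVT_gen f s t (fun _ => 0)) as [c [_ Hc]].
  - intros u Hu; apply Hf, (in_ivl_between a b s t); auto; lra.
  - intros u Hu; apply continuity_pt_filterlim.
    apply (ex_derive_continuous (K := R_AbsRing) (V := R_NormedModule)).
    exists 0; apply Hf, (in_ivl_between a b s t); auto.
  - lra.
Qed.

Lemma derive_0_of_in_ivl_const (a b : Rbar) (f : R -> R) (c s l : R) :
  in_ivl a b s -> (forall t, in_ivl a b t -> f t = c) -> is_derive f s l -> l = 0.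
Proof.
  intros Hs Hc Hf.
  assert (Hconst : is_derive (fun _ => c) s l).
  { apply (is_derive_ext_loc f); auto.
    apply (filter_imp (in_ivl a b)); [exact Hc | exact (in_ivl_locally a b s Hs)]. }
  apply (is_derive_unique (fun _ : R => c) s l) in Hconst.
  now rewrite <- Hconst, Derive_const.
Qed.

Lemma is_derive_Rmult (f g : R -> R) (x df dg : R) :
  is_derive f x df -> is_derive g x dg ->
  is_derive (fun t => f t * g t) x (df * g x + f x * dg).
Proof. intros; apply (is_derive_mult f g); auto; intros; apply Rmult_comm. Qed.

Lemma is_derive_Rplus (f g : R -> R) (x df dg : R) :
  is_derive f x df -> is_derive g x dg -> is_derive (fun t => f t + g t) x (df + dg).
Proof. apply (is_derive_plus f g). Qed.

Lemma is_derive_Rminus (f g : R -> R) (x df dg : R) :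
  is_derive f x df -> is_derive g x dg -> is_derive (fun t => f t - g t) x (df - dg).
Proof. apply (is_derive_minus f g). Qed.

Lemma is_derive_Ropp (f : R -> R) (x df : R) :
  is_derive f x df -> is_derive (fun t => - f t) x (- df).
Proof. apply (is_derive_opp f). Qed.

Lemma is_derive_exp_comp (f : R -> R) (x df : R) :
  is_derive f x df -> is_derive (fun t => exp (f t)) x (df * exp (f x)).
Proof. intros; apply (is_derive_comp exp f); auto; apply is_derive_exp. Qed.

Lemma is_derive_Rconst (c x : R) : is_derive (fun _ => c) x 0.
Proof. exact (is_derive_const (K := R_AbsRing) (V := R_NormedModule) c x). Qed.

Lemma is_derive_eq (f : R -> R) (x l l' : R) : is_derive f x l -> l = l' -> is_derive f x l'.
Proof. now intros ? <-. Qed.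

Ltac derive_rules :=
  repeat lazymatch goal with
  | |- is_derive (fun _ => ?c) _ _ => apply is_derive_Rconst
  | |- is_derive (fun t => _ * _) _ _ => apply is_derive_Rmult
  | |- is_derive (fun t => _ + _) _ _ => apply is_derive_Rplus
  | |- is_derive (fun t => _ - _) _ _ => apply is_derive_Rminus
  | |- is_derive (fun t => - _) _ _ => apply is_derive_Ropp
  | |- is_derive (fun t => exp _) _ _ => apply is_derive_exp_comp
  | _ => eassumption
  end.

Definition frame_eqs (a b : Rbar) (x y p q k : R -> R) : Prop :=
  forall s, in_ivl a b s ->
    is_derive x s (p s) /\ is_derive y s (q s) /\
    is_derive p s (k s * q s) /\ is_derive q s (k s * p s).

Lemma frame_eqs_of_curve (a b : Rbar) (X : R -> pt) (k : R -> R) :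
  unit_speed_curve a b X -> has_curvature a b X k ->
  frame_eqs a b (fun s => fst (X s)) (fun s => snd (X s))
    (fun s => fst (tangent X s)) (fun s => snd (tangent X s)) k.
Proof.
  intros HX Hk s Hs.
  destruct (HX s Hs) as (Hx & Hy & Hp & Hq & _).
  pose proof (Hk s Hs) as Hks.
  unfold tangent', normal, hmul, tangent in Hks; simpl in Hks.
  injection Hks as Hp' Hq'.
  simpl; split; [|split; [|split]].
  - now apply Derive_correct.
  - now apply Derive_correct.
  - rewrite <- Hp'; now apply Derive_correct.
  - rewrite <- Hq'; now apply Derive_correct.
Qed.

Lemma curve_of_frame_eqs (a b : Rbar) (X : R -> pt) (p q k : R -> R) :
  frame_eqs a b (fun s => fst (X s)) (fun s => snd (X s)) p q k ->
  (forall s, in_ivl a b s -> p s * p s - q s * q s = 1) ->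
  unit_speed_curve a b X /\ has_curvature a b X k /\
  forall s, in_ivl a b s -> tangent X s = (p s, q s).
Proof.
  intros Hfr Hunit.
  assert (Htan : forall s, in_ivl a b s -> tangent X s = (p s, q s)).
  { intros s Hs; destruct (Hfr s Hs) as (Hx & Hy & _).
    unfold tangent; f_equal; now apply is_derive_unique. }
  assert (Hder : forall s, in_ivl a b s ->
    is_derive (fun u => fst (tangent X u)) s (k s * q s) /\
    is_derive (fun u => snd (tangent X u)) s (k s * p s)).
  { intros s Hs; destruct (Hfr s Hs) as (_ & _ & Hp & Hq).
    split; [apply (is_derive_ext_loc p) | apply (is_derive_ext_loc q)]; auto;
      apply (filter_imp (in_ivl a b)); try exact (in_ivl_locally a b s Hs);
      intros u Hu; now rewrite Htan. }
  split; [|split]; [intros s Hs..|exact Htan];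
    destruct (Hfr s Hs) as (Hx & Hy & _); destruct (Hder s Hs) as [Hp Hq].
  - split; [|split; [|split; [|split]]]; try (eexists; eassumption).
    unfold mink; rewrite (Htan s Hs); exact (Hunit s Hs).
  - unfold tangent', normal, hmul; rewrite (Htan s Hs); simpl.
    f_equal; now apply is_derive_unique.
Qed.

Lemma translator_tangent (a b : Rbar) (X : R -> pt) (C : pt) (k : R -> R) :
  translator a b X C k <->
  forall s, in_ivl a b s ->
    snd C * fst (tangent X s) - fst C * snd (tangent X s) = k s.
Proof.
  unfold translator, mink, normal, hmul; simpl.
  split; intros H s Hs; specialize (H s Hs); lra.
Qed.

Definition translator_frame (a b : Rbar) (x y p q k : R -> R) (C : pt) : Prop :=
  frame_eqs a b x y p q k /\
  forall s, in_ivl a b s -> p s * p s - q s * q s = 1 /\ snd C * p s - fst C * q s = k s.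

Lemma translator_frame_of_curve (a b : Rbar) (X : R -> pt) (k : R -> R) (C : pt) :
  unit_speed_curve a b X -> has_curvature a b X k -> translator a b X C k ->
  translator_frame a b (fun s => fst (X s)) (fun s => snd (X s))
    (fun s => fst (tangent X s)) (fun s => snd (tangent X s)) k C.
Proof.
  intros HX Hk HC; split; [exact (frame_eqs_of_curve a b X k HX Hk)|].
  intros s Hs; split; [apply (HX s Hs) | exact (proj1 (translator_tangent a b X C k) HC s Hs)].
Qed.

Lemma curve_of_translator_frame (a b : Rbar) (X : R -> pt) (p q k : R -> R) (C : pt) :
  translator_frame a b (fun s => fst (X s)) (fun s => snd (X s)) p q k C ->
  unit_speed_curve a b X /\ has_curvature a b X k /\ translator a b X C k.
Proof.
  intros [Hfr Halg].
  destruct (curve_of_frame_eqs a b X p q k Hfr (fun s Hs => proj1 (Halg s Hs)))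
    as (HX & Hk & Htan).
  split; [exact HX | split; [exact Hk|]].
  apply translator_tangent; intros s Hs; rewrite (Htan s Hs); exact (proj2 (Halg s Hs)).
Qed.

Lemma translator_frame_restrict (a b a' b' : Rbar) (x y p q k : R -> R) (C : pt) :
  translator_frame a b x y p q k C -> (forall s, in_ivl a' b' s -> in_ivl a b s) ->
  translator_frame a' b' x y p q k C.
Proof.
  intros [Hfr Halg] Hsub; split; intros s Hs; [apply Hfr | apply Halg]; auto.
Qed.

Definition null_translator (a b : Rbar) (xi eta u v k : R -> R) (al be : R) : Prop :=
  forall s, in_ivl a b s ->
    is_derive xi s (u s) /\ is_derive eta s (v s) /\
    is_derive u s (k s * u s) /\ is_derive v s (- (k s * v s)) /\
    u s * v s = 1 /\ k s = al * u s + be * v s.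

Lemma translator_frame_null (a b : Rbar) (x y p q k : R -> R) (C : pt) :
  translator_frame a b x y p q k C ->
  null_translator a b (fun s => x s + y s) (fun s => x s - y s)
    (fun s => p s + q s) (fun s => p s - q s) k ((snd C - fst C) / 2) ((snd C + fst C) / 2).
Proof.
  intros [Hfr Halg] s Hs.
  destruct (Hfr s Hs) as (Hx & Hy & Hp & Hq); destruct (Halg s Hs) as [Hunit Htr].
  split; [|split; [|split; [|split; [|split]]]];
    try (eapply is_derive_eq; [derive_rules|]); cbv beta; lra.
Qed.

Lemma null_translator_swap (a b : Rbar) (xi eta u v k : R -> R) (al be : R) :
  null_translator a b xi eta u v k al be ->
  null_translator a b eta xi v u (fun s => - k s) (- be) (- al).
Proof.
  intros Htr s Hs; destruct (Htr s Hs) as (Hxi & Heta & Hu & Hv & Huv & Hk).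
  split; [|split; [|split; [|split; [|split]]]]; auto.
  - eapply is_derive_eq; [exact Hv | ring].
  - eapply is_derive_eq; [exact Hu | ring].
  - now rewrite Rmult_comm.
  - rewrite Hk; ring.
Qed.

Definition on_model_null (m : model) (xi eta : R) : Prop :=
  model_set m ((xi + eta) / 2, (xi - eta) / 2).

Lemma on_model_null_M1 (xi eta : R) : exp eta + exp (- xi) = 2 -> on_model_null M1 xi eta.
Proof.
  intros H; unfold on_model_null; simpl; unfold cosh.
  replace ((xi + eta) / 2) with ((xi - eta) / 2 + eta) by field.
  replace (- ((xi - eta) / 2 + eta)) with ((xi - eta) / 2 + - xi) by field.
  rewrite !exp_plus, <- Rmult_plus_distr_l, H; field.
Qed.

Lemma on_model_null_M2 (xi eta : R) : exp xi - exp eta = 2 -> on_model_null M2 xi eta.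
Proof.
  intros H; unfold on_model_null; simpl; unfold sinh.
  replace ((xi - eta) / 2) with (- ((xi + eta) / 2) + xi) by field.
  replace (- (- ((xi + eta) / 2) + xi)) with (- ((xi + eta) / 2) + eta) by field.
  rewrite !exp_plus, <- Rmult_minus_distr_l, H; field.
Qed.

Lemma on_model_null_M3 (xi eta : R) : xi = exp eta -> on_model_null M3 xi eta.
Proof.
  intros H; unfold on_model_null; simpl.
  replace ((xi + eta) / 2 - (xi - eta) / 2) with eta by field; lra.
Qed.

(* The second alternative is the first one composed with [(x, y) |-> (x, -y)],
   which exchanges [xi] and [eta]. *)
Definition null_classified (a b : Rbar) (xi eta : R -> R) : Prop :=
  exists m mu nu c d, 0 < mu * nu /\
    ((forall s, in_ivl a b s -> on_model_null m (mu * xi s + c) (nu * eta s + d)) \/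
     (forall s, in_ivl a b s -> on_model_null m (mu * eta s + c) (nu * xi s + d))).

Lemma null_classified_swap (a b : Rbar) (xi eta : R -> R) :
  null_classified a b xi eta -> null_classified a b eta xi.
Proof.
  intros (m & mu & nu & c & d & Hmunu & H).
  exists m, mu, nu, c, d; split; [exact Hmunu | tauto].
Qed.

Lemma exp_add_ln (x c : R) : 0 < c -> exp (x + ln c) = c * exp x.
Proof. intros Hc; rewrite exp_plus, exp_ln by exact Hc; ring. Qed.

(* The three sign patterns of [c1], [c2] give [cosh x = e^y] and the two
   orientations of [sinh y = e^(-x)]. *)
Lemma exp_relation_null_classified (a b : Rbar) (xi eta : R -> R) (A B c1 c2 s0 : R) :
  in_ivl a b s0 -> c1 * c2 * (A * B) < 0 ->
  (forall s, in_ivl a b s -> c1 * exp (A * eta s) + c2 * exp (B * xi s) = 1) ->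
  null_classified a b xi eta.
Proof.
  intros Hs0 Hsign Hrel.
  destruct (Rlt_or_le 0 c1) as [Hc1 | Hc1]; destruct (Rlt_or_le 0 c2) as [Hc2 | Hc2].
  - exists M1, (- B), A, (- ln (2 * c2)), (ln (2 * c1)); split.
    + assert (0 < c1 * c2) by nra; nra.
    + left; intros s Hs; apply on_model_null_M1.
      replace (- (- B * xi s + - ln (2 * c2))) with (B * xi s + ln (2 * c2)) by ring.
      rewrite !exp_add_ln by lra; pose proof (Hrel s Hs); lra.
  - assert (Hc2' : c2 < 0) by (destruct Hc2 as [Hlt | Heq]; [exact Hlt | subst; lra]).
    exists M2, A, B, (ln (2 * c1)), (ln (- 2 * c2)); split.
    + assert (c1 * c2 < 0) by nra; nra.
    + right; intros s Hs; apply on_model_null_M2.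
      rewrite !exp_add_ln by lra; pose proof (Hrel s Hs); lra.
  - assert (Hc1' : c1 < 0) by (destruct Hc1 as [Hlt | Heq]; [exact Hlt | subst; lra]).
    exists M2, B, A, (ln (2 * c2)), (ln (- 2 * c1)); split.
    + assert (c1 * c2 < 0) by nra; nra.
    + left; intros s Hs; apply on_model_null_M2.
      rewrite !exp_add_ln by lra; pose proof (Hrel s Hs); lra.
  - pose proof (Hrel s0 Hs0); pose proof (exp_pos (A * eta s0)); pose proof (exp_pos (B * xi s0)).
    nra.
Qed.

Lemma exp_affine_null_classified (a b : Rbar) (xi eta : R -> R) (B K J : R) :
  B <> 0 -> 0 < K ->
  (forall s, in_ivl a b s -> exp (B * eta s) = K * (B * xi s + J)) ->
  null_classified a b xi eta.
Proof.
  intros HB HK Hrel.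
  exists M3, (B * K), B, (K * J), 0; split.
  - assert (0 < B * B) by (apply Rsqr_pos_lt in HB; exact HB); nra.
  - left; intros s Hs; apply on_model_null_M3.
    rewrite Rplus_0_r, Hrel by exact Hs; ring.
Qed.

Section NullTranslator.

Variables (a b : Rbar) (xi eta u v k : R -> R) (al be : R).
Hypothesis Htr : null_translator a b xi eta u v k al be.

Lemma null_first_integral_xi (s t : R) : in_ivl a b s -> in_ivl a b t ->
  (al * (u t * u t) + be) * exp (-2 * al * xi t) =
  (al * (u s * u s) + be) * exp (-2 * al * xi s).
Proof.
  apply (in_ivl_const_of_derive_0 a b (fun r => (al * (u r * u r) + be) * exp (-2 * al * xi r))).
  intros r Hr; destruct (Htr r Hr) as (Hxi & _ & Hu & _ & Huv & Hk).
  eapply is_derive_eq; [derive_rules|]; cbv beta; nsatz.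
Qed.

Lemma null_first_integral_eta (s t : R) : in_ivl a b s -> in_ivl a b t ->
  (al + be * (v t * v t)) * exp (2 * be * eta t) =
  (al + be * (v s * v s)) * exp (2 * be * eta s).
Proof.
  apply (in_ivl_const_of_derive_0 a b (fun r => (al + be * (v r * v r)) * exp (2 * be * eta r))).
  intros r Hr; destruct (Htr r Hr) as (_ & Heta & _ & Hv & Huv & Hk).
  eapply is_derive_eq; [derive_rules|]; cbv beta; nsatz.
Qed.

Lemma null_first_integral_lightlike (s t : R) : al = 0 -> in_ivl a b s -> in_ivl a b t ->
  u t * u t - 2 * be * xi t = u s * u s - 2 * be * xi s.
Proof.
  intros Hal; apply (in_ivl_const_of_derive_0 a b (fun r => u r * u r - 2 * be * xi r)).
  intros r Hr; destruct (Htr r Hr) as (Hxi & _ & Hu & _ & Huv & Hk).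
  eapply is_derive_eq; [derive_rules|]; cbv beta; subst al; nsatz.
Qed.

(* Both first integrals are nonzero where [k <> 0]; eliminating [u] between them
   (using [u v = 1]) leaves a linear relation between [e^(2 be eta)] and
   [e^(-2 al xi)]. *)
Lemma null_translator_generic (s0 : R) :
  al <> 0 -> be <> 0 -> in_ivl a b s0 -> k s0 <> 0 -> null_classified a b xi eta.
Proof.
  intros Hal Hbe Hs0 Hk0.
  set (P0 := (al * (u s0 * u s0) + be) * exp (-2 * al * xi s0)).
  set (S0 := (al + be * (v s0 * v s0)) * exp (2 * be * eta s0)).
  assert (HPS : 0 < P0 * S0).
  { destruct (Htr s0 Hs0) as (_ & _ & _ & _ & Huv & Hk).
    assert (HPS : P0 * S0 = (k s0 * k s0) * (exp (-2 * al * xi s0) * exp (2 * be * eta s0)))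
      by (unfold P0, S0; rewrite Hk; nsatz).
    rewrite HPS; apply Rmult_lt_0_compat.
    - apply Rsqr_pos_lt in Hk0; exact Hk0.
    - apply Rmult_lt_0_compat; apply exp_pos. }
  assert (HP0 : P0 <> 0) by (intros E; rewrite E in HPS; lra).
  assert (HS0 : S0 <> 0) by (intros E; rewrite E in HPS; lra).
  apply (exp_relation_null_classified a b xi eta (2 * be) (-2 * al) (al / S0) (be / P0) s0 Hs0).
  - replace (al / S0 * (be / P0) * (2 * be * (-2 * al)))
      with (- 4 * ((al * be) * (al * be)) / (P0 * S0)) by (field; auto).
    apply Rdiv_neg_pos; [|exact HPS].
    assert (0 < (al * be) * (al * be)) by (apply Rsqr_pos_lt, Rmult_integral_contrapositive; auto).
    lra.
  - intros s Hs.
    pose proof (null_first_integral_xi s0 s Hs0 Hs) as HP.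
    pose proof (null_first_integral_eta s0 s Hs0 Hs) as HS.
    fold P0 in HP; fold S0 in HS.
    destruct (Htr s Hs) as (_ & _ & _ & _ & Huv & _).
    assert (Hsum : al * P0 * exp (2 * be * eta s) + be * S0 * exp (-2 * al * xi s) = P0 * S0)
      by (rewrite <- HP, <- HS; nsatz).
    apply (Rmult_eq_reg_r (P0 * S0)); [|exact (Rgt_not_eq _ _ HPS)].
    rewrite Rmult_1_l; rewrite <- Hsum at 2; field; auto.
Qed.

(* For light-like [C] ([al = 0]) the second integral gives
   [e^(2 be eta) = K u^2], and [u^2] is affine in [xi]. *)
Lemma null_translator_lightlike (s0 : R) :
  al = 0 -> be <> 0 -> in_ivl a b s0 -> null_classified a b xi eta.
Proof.
  intros Hal Hbe Hs0.
  set (K := v s0 * v s0 * exp (2 * be * eta s0)).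
  assert (HK : 0 < K).
  { destruct (Htr s0 Hs0) as (_ & _ & _ & _ & Huv & _).
    assert (Hv0 : v s0 <> 0) by (intros E; rewrite E in Huv; lra).
    apply Rmult_lt_0_compat; [apply Rsqr_pos_lt, Hv0 | apply exp_pos]. }
  apply (exp_affine_null_classified a b xi eta (2 * be) K (u s0 * u s0 - 2 * be * xi s0));
    [lra | exact HK |].
  intros s Hs.
  pose proof (null_first_integral_eta s0 s Hs0 Hs) as HS.
  pose proof (null_first_integral_lightlike s0 s Hal Hs0 Hs) as HU.
  destruct (Htr s Hs) as (_ & _ & _ & _ & Huv & _).
  subst al; rewrite <- HU.
  apply (Rmult_eq_reg_l be); [|exact Hbe].
  unfold K; nsatz.
Qed.

End NullTranslator.

Lemma null_translator_classified (a b : Rbar) (xi eta u v k : R -> R) (al be s0 : R) :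
  null_translator a b xi eta u v k al be -> in_ivl a b s0 -> k s0 <> 0 ->
  null_classified a b xi eta.
Proof.
  intros Htr Hs0 Hk0.
  destruct (Req_dec al 0) as [Hal | Hal]; destruct (Req_dec be 0) as [Hbe | Hbe].
  - destruct (Htr s0 Hs0) as (_ & _ & _ & _ & _ & Hk).
    rewrite Hk, Hal, Hbe in Hk0; lra.
  - exact (null_translator_lightlike a b xi eta u v k al be Htr s0 Hal Hbe Hs0).
  - apply null_classified_swap.
    apply (null_translator_lightlike a b eta xi v u (fun s => - k s) (- be) (- al)
             (null_translator_swap a b xi eta u v k al be Htr) s0); auto; lra.
  - exact (null_translator_generic a b xi eta u v k al be Htr s0 Hal Hbe Hs0 Hk0).
Qed.

Definition null_affine (mu nu c d : R) (p : pt) : pt :=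
  let xi := mu * (fst p + snd p) + c in
  let eta := nu * (fst p - snd p) + d in
  ((xi + eta) / 2, (xi - eta) / 2).

Definition reflect (p : pt) : pt := (fst p, - snd p).

(* [null_affine] scales the two null directions by [mu] and [nu]; it is
   [sqrt (mu nu)] times a Lorentz boost, plus a translation. *)
Lemma similarity_null_affine (mu nu c d : R) :
  0 < mu * nu -> similarity (null_affine mu nu c d).
Proof.
  intros Hmunu.
  set (lam := sqrt (mu * nu)).
  assert (Hlam : 0 < lam) by (apply sqrt_lt_R0; exact Hmunu).
  assert (Hlam2 : / lam * / lam * (mu * nu) = 1).
  { rewrite <- (sqrt_sqrt (mu * nu)) by lra; fold lam; field; lra. }
  exists lam, ((mu + nu) / 2 / lam), ((mu - nu) / 2 / lam),
    ((mu - nu) / 2 / lam), ((mu + nu) / 2 / lam), ((c + d) / 2), ((c - d) / 2).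
  split; [exact Hlam | split].
  - intros [x1 y1] [x2 y2]; unfold mink; simpl.
    transitivity (/ lam * / lam * (mu * nu) * (x1 * x2 - y1 * y2)); [field; lra|].
    rewrite Hlam2; ring.
  - intros [x y]; unfold null_affine; simpl; f_equal; field; lra.
Qed.

Lemma similarity_reflect (F : pt -> pt) : similarity F -> similarity (fun p => F (reflect p)).
Proof.
  intros (lam & a11 & a12 & a21 & a22 & b1 & b2 & Hlam & Hiso & HF).
  exists lam, a11, (- a12), a21, (- a22), b1, b2.
  split; [exact Hlam | split].
  - intros [x1 y1] [x2 y2].
    pose proof (Hiso (x1, - y1) (x2, - y2)) as H; unfold mink in *; simpl in *; lra.
  - intros [x y]; rewrite HF; unfold reflect; simpl; f_equal; f_equal; ring.
Qed.

Lemma null_classified_similar (a b : Rbar) (X : R -> pt) :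
  null_classified a b (fun s => fst (X s) + snd (X s)) (fun s => fst (X s) - snd (X s)) ->
  exists F m, similarity F /\ forall s, in_ivl a b s -> model_set m (F (X s)).
Proof.
  intros (m & mu & nu & c & d & Hmunu & [H | H]).
  - exists (null_affine mu nu c d), m.
    split; [exact (similarity_null_affine mu nu c d Hmunu) | exact H].
  - exists (fun p => null_affine mu nu c d (reflect p)), m.
    split; [exact (similarity_reflect _ (similarity_null_affine mu nu c d Hmunu))|].
    intros s Hs; specialize (H s Hs); unfold on_model_null in H.
    unfold null_affine, reflect; simpl.
    replace (fst (X s) - - snd (X s)) with (fst (X s) + snd (X s)) by ring.
    replace (fst (X s) + - snd (X s)) with (fst (X s) - snd (X s)) by ring.
    exact H.
Qed.

Definition model_tangent (m : model) (s : R) : pt :=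
  match m with
  | M1 => (1 / cos s, sin s / cos s)
  | M2 => (cosh s / sinh s, - 1 / sinh s)
  | M3 => (s / 4 + 1 / s, s / 4 - 1 / s)
  end.

Lemma translator_frame_M1 :
  translator_frame (dom_lo M1) (dom_hi M1) (fun s => fst (gamma M1 s)) (fun s => snd (gamma M1 s))
    (fun s => fst (model_tangent M1 s)) (fun s => snd (model_tangent M1 s)) (model_curv M1)
    (model_vel M1).
Proof.
  split; intros s [Hlo Hhi]; simpl in Hlo, Hhi |- *.
  all: assert (Hc : 0 < cos s) by (apply cos_gt_0; lra).
  all: assert (Hsc : sin s * sin s + cos s * cos s = 1)
         by (rewrite <- (sin2_cos2 s); unfold Rsqr; ring).
  all: assert (Hs : 0 < 1 + sin s) by nra.
  - split; [|split; [|split]]; auto_derive; repeat split; try lra.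
    all: try (apply Rdiv_lt_0_compat; lra).
    all: field_simplify_eq; [nra | repeat split; lra].
  - split; field_simplify_eq; [nra | lra | lra | lra].
Qed.

Lemma translator_frame_M2 :
  translator_frame (dom_lo M2) (dom_hi M2) (fun s => fst (gamma M2 s)) (fun s => snd (gamma M2 s))
    (fun s => fst (model_tangent M2 s)) (fun s => snd (model_tangent M2 s)) (model_curv M2)
    (model_vel M2).
Proof.
  split; intros s [Hlo _]; simpl in Hlo |- *; unfold sinh, cosh.
  all: assert (He : 1 < exp s) by (rewrite <- exp_0; apply exp_increasing; lra).
  all: assert (Hinv : / exp s < 1) by (rewrite <- Rinv_1; apply Rinv_lt_contravar; lra).
  all: assert (Hinv0 : 0 < / exp s) by (apply Rinv_0_lt_compat; lra).
  - split; [|split; [|split]]; auto_derive; repeat split; rewrite ?exp_Ropp; try lra.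
    all: try (apply Rdiv_lt_0_compat; lra).
    all: field; repeat split; try lra; nra.
  - rewrite exp_Ropp; split; field; repeat split; try lra; nra.
Qed.

Lemma translator_frame_M3 :
  translator_frame (dom_lo M3) (dom_hi M3) (fun s => fst (gamma M3 s)) (fun s => snd (gamma M3 s))
    (fun s => fst (model_tangent M3 s)) (fun s => snd (model_tangent M3 s)) (model_curv M3)
    (model_vel M3).
Proof.
  split; intros s [Hlo _]; simpl in Hlo |- *.
  - split; [|split; [|split]]; auto_derive; repeat split; try lra; field; lra.
  - split; field; lra.
Qed.

Lemma translator_frame_model (m : model) :
  translator_frame (dom_lo m) (dom_hi m) (fun s => fst (gamma m s)) (fun s => snd (gamma m s))
    (fun s => fst (model_tangent m s)) (fun s => snd (model_tangent m s)) (model_curv m)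
    (model_vel m).
Proof.
  destruct m; [exact translator_frame_M1 | exact translator_frame_M2 | exact translator_frame_M3].
Qed.

Lemma exp_mul_exp_opp (x : R) : exp x * exp (- x) = 1.
Proof. rewrite <- exp_plus, Rplus_opp_r; apply exp_0. Qed.

Lemma model_set_M1 (p : pt) :
  model_set M1 p <-> exists s, in_ivl (dom_lo M1) (dom_hi M1) s /\ gamma M1 s = p.
Proof.
  destruct p as [x y]; simpl; split.
  - intros H; exists (atan (sinh x)).
    pose proof (exp_mul_exp_opp x); pose proof (exp_pos x); pose proof (exp_pos (- x)).
    assert (Hch : 0 < cosh x) by (unfold cosh; lra).
    assert (Hsq : sqrt (1 + (sinh x)²) = cosh x).
    { rewrite <- (sqrt_square (cosh x)) by lra; f_equal; unfold Rsqr, sinh, cosh; nra. }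
    assert (Hcos : cos (atan (sinh x)) = / cosh x) by (rewrite cos_atan, Hsq; field; lra).
    assert (Hsin : sin (atan (sinh x)) = sinh x / cosh x) by (rewrite sin_atan, Hsq; reflexivity).
    split.
    + pose proof (atan_bound (sinh x)); unfold in_ivl; simpl; lra.
    + rewrite Hcos, Hsin; f_equal.
      * replace ((1 + sinh x / cosh x) / / cosh x) with (exp x) by (unfold sinh, cosh; field; lra).
        apply ln_exp.
      * rewrite ln_Rinv, H, ln_exp by lra; ring.
  - intros [s [[Hlo Hhi] Hs]]; simpl in Hlo, Hhi; injection Hs as <- <-.
    assert (Hc : 0 < cos s) by (apply cos_gt_0; lra).
    assert (Hsc : sin s * sin s + cos s * cos s = 1)
      by (rewrite <- (sin2_cos2 s); unfold Rsqr; ring).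
    assert (Hsin : 0 < 1 + sin s) by nra.
    unfold cosh; rewrite !exp_Ropp, !exp_ln by (try apply Rdiv_lt_0_compat; lra).
    field_simplify_eq; [lra | repeat split; lra].
Qed.

Lemma model_set_M2 (p : pt) :
  model_set M2 p <-> exists s, in_ivl (dom_lo M2) (dom_hi M2) s /\ gamma M2 s = p.
Proof.
  destruct p as [x y]; simpl; split.
  - intros H.
    assert (Hy : 0 < y).
    { destruct (Rlt_or_le 0 y) as [Hy | Hy]; [exact Hy|].
      pose proof (exp_pos (- x)).
      assert (sinh y <= 0)
        by (rewrite <- sinh_0; destruct Hy as [Hy | ->]; [left; apply sinh_lt | right]; auto).
      lra. }
    set (E := exp y).
    assert (HE : 1 < E) by (unfold E; rewrite <- exp_0; apply exp_increasing; lra).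
    assert (HEinv : exp (- y) = / E) by (unfold E; apply exp_Ropp).
    assert (Hw : 0 < (E + 1) / (E - 1)) by (apply Rdiv_lt_0_compat; lra).
    exists (ln ((E + 1) / (E - 1))); split.
    + unfold in_ivl; simpl; split; [|exact I].
      rewrite <- ln_1; apply ln_increasing; [lra|].
      apply (Rmult_lt_reg_r (E - 1)); [lra|].
      replace ((E + 1) / (E - 1) * (E - 1)) with (E + 1) by (field; lra); lra.
    + rewrite exp_ln by exact Hw; f_equal.
      * unfold sinh; rewrite exp_Ropp, exp_ln by exact Hw.
        replace (((E + 1) / (E - 1) - / ((E + 1) / (E - 1))) / 2) with (/ sinh y).
        -- rewrite H, <- exp_Ropp, Ropp_involutive; apply ln_exp.
        -- unfold sinh; rewrite HEinv; fold E; field; repeat split; try lra; nra.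
      * replace (((E + 1) / (E - 1) + 1) / ((E + 1) / (E - 1) - 1)) with E
          by (field; repeat split; lra).
        apply ln_exp.
  - intros [s [[Hlo _] Hs]]; simpl in Hlo; injection Hs as <- <-.
    assert (He : 1 < exp s) by (rewrite <- exp_0; apply exp_increasing; lra).
    assert (Hw : 0 < (exp s + 1) / (exp s - 1)) by (apply Rdiv_lt_0_compat; lra).
    assert (Hsh : 0 < sinh s) by (rewrite <- sinh_0; apply sinh_lt; exact Hlo).
    rewrite exp_Ropp, !exp_ln by auto.
    unfold sinh; rewrite !exp_Ropp, exp_ln by exact Hw; field; repeat split; try lra; nra.
Qed.

Lemma model_set_M3 (p : pt) :
  model_set M3 p <-> exists s, in_ivl (dom_lo M3) (dom_hi M3) s /\ gamma M3 s = p.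
Proof.
  destruct p as [x y]; simpl; split.
  - intros H; exists (2 * exp ((x - y) / 2)).
    pose proof (exp_pos ((x - y) / 2)).
    assert (Hsq : exp ((x - y) / 2) * exp ((x - y) / 2) = exp (x - y))
      by (rewrite <- exp_plus; f_equal; field).
    split.
    + unfold in_ivl; simpl; split; [lra | exact I].
    + replace (2 * exp ((x - y) / 2) / 2) with (exp ((x - y) / 2)) by field.
      rewrite ln_exp; rewrite <- H in Hsq; f_equal; lra.
  - intros [s [[Hlo _] Hs]]; simpl in Hlo; injection Hs as <- <-.
    replace (s * (s * 1) / 8 + ln (s / 2) - (s * (s * 1) / 8 - ln (s / 2)))
      with (ln (s / 2) + ln (s / 2)) by ring.
    rewrite exp_plus, exp_ln by lra; field.
Qed.

Lemma model_set_gamma (m : model) (p : pt) :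
  model_set m p <-> exists s, in_ivl (dom_lo m) (dom_hi m) s /\ gamma m s = p.
Proof. destruct m; [apply model_set_M1 | apply model_set_M2 | apply model_set_M3]. Qed.

Lemma model_curv_neq_0 (m : model) (s : R) :
  in_ivl (dom_lo m) (dom_hi m) s -> model_curv m s <> 0.
Proof.
  intros [Hlo Hhi]; destruct m; simpl in *; unfold Rdiv; rewrite Rmult_1_l;
    apply Rinv_neq_0_compat.
  - pose proof (cos_gt_0 s Hlo Hhi); lra.
  - pose proof (sinh_lt 0 s Hlo) as Hsh; rewrite sinh_0 in Hsh; lra.
  - lra.
Qed.

Lemma lorentz_isometry_form (a11 a12 a21 a22 : R) :
  (forall p q : pt, mink (a11 * fst p + a12 * snd p, a21 * fst p + a22 * snd p)
                         (a11 * fst q + a12 * snd q, a21 * fst q + a22 * snd q) = mink p q) ->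
  exists e, e * e = 1 /\ a22 = e * a11 /\ a12 = e * a21 /\ a11 * a11 - a21 * a21 = 1.
Proof.
  intros H.
  pose proof (H (1, 0) (1, 0)) as H11; pose proof (H (0, 1) (0, 1)) as H22;
    pose proof (H (1, 0) (0, 1)) as H12.
  unfold mink in H11, H22, H12; simpl in H11, H22, H12.
  assert (Hdiag : (a22 - a11) * (a22 + a11) = 0) by nsatz.
  assert (Ha11 : a11 <> 0) by (intros E; rewrite E in H11; nra).
  apply Rmult_integral in Hdiag; destruct Hdiag as [Hdiag | Hdiag].
  - exists 1.
    assert (Hoff : a11 * (a12 - a21) = 0) by (replace a22 with a11 in H12 by lra; nsatz).
    apply Rmult_integral in Hoff; destruct Hoff as [Hoff | Hoff]; [contradiction|].
    repeat split; lra.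
  - exists (-1).
    assert (Hoff : a11 * (a12 + a21) = 0) by (replace a22 with (- a11) in H12 by lra; nsatz).
    apply Rmult_integral in Hoff; destruct Hoff as [Hoff | Hoff]; [contradiction|].
    repeat split; lra.
Qed.

Lemma frame_eqs_lorentz_image (a b : Rbar) (x y p q k : R -> R) (lam e a11 a21 b1 b2 : R) :
  frame_eqs a b x y p q k -> e * e = 1 ->
  frame_eqs a b
    (fun s => lam * (a11 * x s + e * a21 * y s) + b1)
    (fun s => lam * (a21 * x s + e * a11 * y s) + b2)
    (fun s => lam * (a11 * p s + e * a21 * q s))
    (fun s => lam * (a21 * p s + e * a11 * q s))
    (fun s => e * k s).
Proof.
  intros Hfr He s Hs; destruct (Hfr s Hs) as (Hx & Hy & Hp & Hq).
  split; [|split; [|split]]; (eapply is_derive_eq; [derive_rules|]); cbv beta;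
    revert He; generalize (x s) (y s) (p s) (q s) (k s); clear; intros; nsatz.
Qed.

Lemma frame_eqs_independent (a b : Rbar) (x y p q k : R -> R) (w1 w2 s0 : R) :
  frame_eqs a b x y p q k -> in_ivl a b s0 ->
  p s0 * p s0 - q s0 * q s0 = 1 -> k s0 <> 0 ->
  (forall s, in_ivl a b s -> w1 * p s + w2 * q s = 0) -> w1 = 0 /\ w2 = 0.
Proof.
  intros Hfr Hs0 Hunit Hk0 Hw.
  destruct (Hfr s0 Hs0) as (_ & _ & Hp & Hq).
  assert (Hd : is_derive (fun t => w1 * p t + w2 * q t) s0
                 (k s0 * (w1 * q s0 + w2 * p s0))).
  { eapply is_derive_eq; [derive_rules|]; cbv beta; ring. }
  apply (derive_0_of_in_ivl_const a b _ 0 s0 _ Hs0 Hw) in Hd.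
  apply Rmult_integral in Hd; destruct Hd as [Hd | Hd]; [contradiction|].
  pose proof (Hw s0 Hs0) as Hw0.
  revert Hunit Hd Hw0; generalize (p s0) (q s0); clear; intros; split; nsatz.
Qed.

Section OnModelSet.

Variables (a b : Rbar) (Y1 Y2 P Q K : R -> R).
Hypothesis Hfr : frame_eqs a b Y1 Y2 P Q K.
Hypothesis Hspace : forall s, in_ivl a b s -> 0 < P s * P s - Q s * Q s.

(* Differentiating the equation of the model set twice along the curve. *)
Lemma on_model_set_M1_curvature :
  (forall s, in_ivl a b s -> model_set M1 (Y1 s, Y2 s)) ->
  forall s, in_ivl a b s -> K s = P s.
Proof.
  intros Hm.
  assert (G1 : forall s, in_ivl a b s -> exp (Y1 s) + exp (- Y1 s) - 2 * exp (Y2 s) = 0).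
  { intros s Hs; specialize (Hm s Hs); simpl in Hm; unfold cosh in Hm; lra. }
  assert (G2 : forall s, in_ivl a b s ->
    Q s * (exp (Y1 s) + exp (- Y1 s)) - P s * (exp (Y1 s) - exp (- Y1 s)) = 0).
  { intros s Hs; destruct (Hfr s Hs) as (H1 & H2 & _).
    assert (D : is_derive (fun t => exp (Y1 t) + exp (- Y1 t) - 2 * exp (Y2 t)) s
      (P s * exp (Y1 s) + - P s * exp (- Y1 s) - (0 * exp (Y2 s) + 2 * (Q s * exp (Y2 s))))).
    { eapply is_derive_eq; [derive_rules|]; cbv beta; ring. }
    apply (derive_0_of_in_ivl_const a b _ 0 s _ Hs G1) in D.
    pose proof (G1 s Hs); nsatz. }
  intros s Hs; destruct (Hfr s Hs) as (H1 & H2 & H3 & H4).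
  assert (D : is_derive
    (fun t => Q t * (exp (Y1 t) + exp (- Y1 t)) - P t * (exp (Y1 t) - exp (- Y1 t))) s
    (K s * P s * (exp (Y1 s) + exp (- Y1 s)) + Q s * (P s * exp (Y1 s) + - P s * exp (- Y1 s))
     - (K s * Q s * (exp (Y1 s) - exp (- Y1 s))
        + P s * (P s * exp (Y1 s) - - P s * exp (- Y1 s))))).
  { eapply is_derive_eq; [derive_rules|]; cbv beta; ring. }
  apply (derive_0_of_in_ivl_const a b _ 0 s _ Hs G2) in D.
  pose proof (G2 s Hs); pose proof (exp_mul_exp_opp (Y1 s)).
  assert (Z : P s * (K s - P s) = 0) by nsatz.
  apply Rmult_integral in Z; destruct Z as [Z | Z].
  - pose proof (Hspace s Hs); rewrite Z in *; nra.
  - lra.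
Qed.

Lemma on_model_set_M2_curvature :
  (forall s, in_ivl a b s -> model_set M2 (Y1 s, Y2 s)) ->
  forall s, in_ivl a b s -> K s = - Q s.
Proof.
  intros Hm.
  assert (G1 : forall s, in_ivl a b s -> exp (Y2 s) - exp (- Y2 s) - 2 * exp (- Y1 s) = 0).
  { intros s Hs; specialize (Hm s Hs); simpl in Hm; unfold sinh in Hm; lra. }
  assert (G2 : forall s, in_ivl a b s ->
    (exp (Y2 s) + exp (- Y2 s)) * Q s + (exp (Y2 s) - exp (- Y2 s)) * P s = 0).
  { intros s Hs; destruct (Hfr s Hs) as (H1 & H2 & _).
    assert (D : is_derive (fun t => exp (Y2 t) - exp (- Y2 t) - 2 * exp (- Y1 t)) s
      (Q s * exp (Y2 s) - - Q s * exp (- Y2 s) - (0 * exp (- Y1 s) + 2 * (- P s * exp (- Y1 s))))).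
    { eapply is_derive_eq; [derive_rules|]; cbv beta; ring. }
    apply (derive_0_of_in_ivl_const a b _ 0 s _ Hs G1) in D.
    pose proof (G1 s Hs); nsatz. }
  intros s Hs; destruct (Hfr s Hs) as (H1 & H2 & H3 & H4).
  assert (D : is_derive
    (fun t => (exp (Y2 t) + exp (- Y2 t)) * Q t + (exp (Y2 t) - exp (- Y2 t)) * P t) s
    ((Q s * exp (Y2 s) + - Q s * exp (- Y2 s)) * Q s + (exp (Y2 s) + exp (- Y2 s)) * (K s * P s)
     + ((Q s * exp (Y2 s) - - Q s * exp (- Y2 s)) * P s
        + (exp (Y2 s) - exp (- Y2 s)) * (K s * Q s)))).
  { eapply is_derive_eq; [derive_rules|]; cbv beta; ring. }
  apply (derive_0_of_in_ivl_const a b _ 0 s _ Hs G2) in D.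
  pose proof (G2 s Hs); pose proof (exp_mul_exp_opp (Y2 s)).
  assert (Z : P s * (K s + Q s) = 0) by nsatz.
  apply Rmult_integral in Z; destruct Z as [Z | Z].
  - pose proof (Hspace s Hs); rewrite Z in *; nra.
  - lra.
Qed.

Lemma on_model_set_M3_curvature :
  (forall s, in_ivl a b s -> model_set M3 (Y1 s, Y2 s)) ->
  forall s, in_ivl a b s -> 2 * K s = P s - Q s.
Proof.
  intros Hm.
  assert (G1 : forall s, in_ivl a b s -> Y1 s + Y2 s - exp (Y1 s - Y2 s) = 0).
  { intros s Hs; specialize (Hm s Hs); simpl in Hm; lra. }
  assert (G2 : forall s, in_ivl a b s -> P s + Q s - (P s - Q s) * exp (Y1 s - Y2 s) = 0).
  { intros s Hs; destruct (Hfr s Hs) as (H1 & H2 & _).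
    assert (D : is_derive (fun t => Y1 t + Y2 t - exp (Y1 t - Y2 t)) s
      (P s + Q s - (P s - Q s) * exp (Y1 s - Y2 s))).
    { eapply is_derive_eq; [derive_rules|]; cbv beta; ring. }
    exact (derive_0_of_in_ivl_const a b _ 0 s _ Hs G1 D). }
  intros s Hs; destruct (Hfr s Hs) as (H1 & H2 & H3 & H4).
  assert (D : is_derive (fun t => P t + Q t - (P t - Q t) * exp (Y1 t - Y2 t)) s
    (K s * Q s + K s * P s - ((K s * Q s - K s * P s) * exp (Y1 s - Y2 s)
       + (P s - Q s) * ((P s - Q s) * exp (Y1 s - Y2 s))))).
  { eapply is_derive_eq; [derive_rules|]; cbv beta; ring. }
  apply (derive_0_of_in_ivl_const a b _ 0 s _ Hs G2) in D.
  pose proof (G2 s Hs) as E2; pose proof (exp_pos (Y1 s - Y2 s)).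
  assert (Z : exp (Y1 s - Y2 s) * ((P s - Q s) * (2 * K s - (P s - Q s))) = 0)
    by (revert D E2; generalize (exp (Y1 s - Y2 s)) (K s) (P s) (Q s); clear; intros; nsatz).
  apply Rmult_integral in Z; destruct Z as [Z | Z]; [lra|].
  apply Rmult_integral in Z; destruct Z as [Z | Z]; [|lra].
  pose proof (Hspace s Hs); replace (P s) with (Q s) in * by lra; lra.
Qed.

Lemma on_model_set_translator (m : model) :
  (forall s, in_ivl a b s -> model_set m (Y1 s, Y2 s)) ->
  forall s, in_ivl a b s -> snd (model_vel m) * P s - fst (model_vel m) * Q s = K s.
Proof.
  intros Hm s Hs; destruct m; simpl.
  - rewrite (on_model_set_M1_curvature Hm s Hs); ring.
  - rewrite (on_model_set_M2_curvature Hm s Hs); ring.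
  - pose proof (on_model_set_M3_curvature Hm s Hs); lra.
Qed.

End OnModelSet.
(* The model velocities are time-like, space-like and light-like respectively. *)
Lemma model_vel_mink_scale (m m' : model) (l : R) :
  0 < l -> mink (model_vel m) (model_vel m) = l * mink (model_vel m') (model_vel m') -> m = m'.
Proof. intros Hl; destruct m, m'; unfold mink; simpl; intros; auto; lra. Qed.

(* Comparing the two translator equations gives a linear relation between the
   tangent components, which must be trivial since [k <> 0]. *)
Lemma translator_velocity_lorentz_image (a b : Rbar) (x y p q k : R -> R) (C C' : pt)
    (lam e a11 a21 s0 : R) :
  translator_frame a b x y p q k C -> in_ivl a b s0 -> k s0 <> 0 ->
  e * e = 1 -> a11 * a11 - a21 * a21 = 1 ->
  (forall s, in_ivl a b s ->
     snd C' * (lam * (a11 * p s + e * a21 * q s)) - fst C' * (lam * (a21 * p s + e * a11 * q s))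
     = e * k s) ->
  mink C C = lam * lam * mink C' C'.
Proof.
  intros [Hfr Halg] Hs0 Hk0 He Hdet Himg.
  destruct (frame_eqs_independent a b x y p q k
    (lam * (snd C' * a11 - fst C' * a21) - e * snd C)
    (lam * e * (snd C' * a21 - fst C' * a11) + e * fst C) s0 Hfr Hs0
    (proj1 (Halg s0 Hs0)) Hk0) as [W1 W2].
  - intros s Hs; pose proof (Himg s Hs) as Hi; destruct (Halg s Hs) as [_ Ht].
    revert Hi Ht; generalize (p s) (q s) (k s); clear; intros; nsatz.
  - unfold mink; revert W1 W2 He Hdet.
    generalize (fst C) (snd C) (fst C') (snd C'); clear; intros; nsatz.
Qed.

Lemma model_not_locally_similar (m m' : model) (F : pt -> pt) (c d : R) :
  m <> m' -> similarity F -> c < d ->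
  (forall s, c < s < d -> in_ivl (dom_lo m) (dom_hi m) s) ->
  ~ (forall s, c < s < d -> model_set m' (F (gamma m s))).
Proof.
  intros Hmm' (lam & a11 & a12 & a21 & a22 & b1 & b2 & Hlam & Hiso & HF) Hcd Hdom Hon.
  destruct (lorentz_isometry_form a11 a12 a21 a22 Hiso) as (e & He & -> & -> & Hdet).
  pose proof (translator_frame_restrict _ _ (Finite c) (Finite d) _ _ _ _ _ _
    (translator_frame_model m) Hdom) as Hframe.
  set (x := fun s => fst (gamma m s)) in Hframe; set (y := fun s => snd (gamma m s)) in Hframe.
  set (p := fun s => fst (model_tangent m s)) in Hframe.
  set (q := fun s => snd (model_tangent m s)) in Hframe.
  assert (Hs0 : in_ivl (Finite c) (Finite d) ((c + d) / 2)) by (split; simpl; lra).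
  apply Hmm', (model_vel_mink_scale m m' (lam * lam)); [nra|].
  apply (translator_velocity_lorentz_image (Finite c) (Finite d) x y p q (model_curv m)
           _ _ lam e a11 a21 ((c + d) / 2) Hframe Hs0); auto.
  - exact (model_curv_neq_0 m _ (Hdom _ Hs0)).
  - apply (on_model_set_translator (Finite c) (Finite d)
      (fun s => lam * (a11 * x s + e * a21 * y s) + b1)
      (fun s => lam * (a21 * x s + e * a11 * y s) + b2)).
    + exact (frame_eqs_lorentz_image _ _ _ _ _ _ _ lam e a11 a21 b1 b2 (proj1 Hframe) He).
    + intros s Hs; destruct (proj2 Hframe s Hs) as [Hunit _].
      replace ((lam * (a11 * p s + e * a21 * q s)) * (lam * (a11 * p s + e * a21 * q s))
               - (lam * (a21 * p s + e * a11 * q s)) * (lam * (a21 * p s + e * a11 * q s)))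
        with (lam * lam) by (revert He Hdet Hunit; generalize (p s) (q s); clear; intros; nsatz).
      nra.
    + intros s Hs; specialize (Hon s Hs); rewrite HF in Hon; exact Hon.
Qed.

Theorem theorem5p1 :
  (forall m : model,
      unit_speed_curve (dom_lo m) (dom_hi m) (gamma m) /\
      has_curvature (dom_lo m) (dom_hi m) (gamma m) (model_curv m) /\
      translator (dom_lo m) (dom_hi m) (gamma m) (model_vel m) (model_curv m) /\
      (forall p, model_set m p <->
                 exists s, in_ivl (dom_lo m) (dom_hi m) s /\ gamma m s = p)) /\
  (forall (a b : Rbar) (X : R -> pt) (k : R -> R) (C : pt),
      Rbar_lt a b ->
      unit_speed_curve a b X ->
      has_curvature a b X k ->
      translator a b X C k ->
      (exists s0, in_ivl a b s0 /\ k s0 <> 0) ->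
      exists (F : pt -> pt) (m : model),
        similarity F /\ forall s, in_ivl a b s -> model_set m (F (X s))) /\
  (forall (m m' : model) (F : pt -> pt) (c d : R),
      m <> m' -> similarity F -> c < d ->
      (forall s, c < s < d -> in_ivl (dom_lo m) (dom_hi m) s) ->
      ~ (forall s, c < s < d -> model_set m' (F (gamma m s)))).
Proof.
  split; [|split].
  - intros m.
    destruct (curve_of_translator_frame _ _ (gamma m) _ _ _ _ (translator_frame_model m))
      as (HX & Hk & HC).
    split; [exact HX | split; [exact Hk | split; [exact HC | apply model_set_gamma]]].
  - intros a b X k C _ HX Hk HC [s0 [Hs0 Hk0]].
    apply null_classified_similar.
    exact (null_translator_classified a b _ _ _ _ k _ _ s0
             (translator_frame_null _ _ _ _ _ _ _ _ (translator_frame_of_curve a b X k C HX Hk HC))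
             Hs0 Hk0).
  - exact model_not_locally_similar.
Qed.
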